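(* Let $S$ be a pomonoid and $B$ an $S$-poset. Every regular injective object $f:X\to B$ of $\mathbf{Pos}\text{-}S/B$ is a topological functor when $X$ and $B$ are regarded as categories (posets) and $f$ as a functor.
   Context: $\mathbf{Pos}\text{-}S$ is the category of right $S$-posets over a pomonoid $S$ with action-preserving monotone maps; $\mathbf{Pos}\text{-}S/B$ is its slice over $B$. Regular injective means injective with respect to order-embeddings (the regular monomorphisms). A poset is viewed as a category with a unique arrow $a\to a'$ iff $a\le a'$; monotone maps are functors. For a functor $G:\mathcal A\to\mathcal X$, a source $(f_i:A\to A_i)_{i\in I}$ in $\mathcal A$ is $G$-initial if for every source $(g_i:C\to A_i)_{i\in I}$ in $\mathcal A$ and every $\mathcal X$-morphism $h:GC\to GA$ with $Gg_i=Gf_i\circ h$ for all $i$, there is a unique $\bar h:C\to A$ with $G\bar h=h$ and $g_i=f_i\bar h$ for all $i$. A source $(f_i:A\to A_i)$ lifts a $G$-structured source $(x_i:X\to GA_i)$ if $GA=X$ and $Gf_i=x_i$ for all $i$. $G$ is topological if every $G$-structured source $(X\to GA_i)_{i\in I}$ has a unique $G$-initial lift. *)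

Set Implicit Arguments.
Unset Strict Implicit.

(** * Posets (viewed as thin categories: an arrow a -> a' is a proof of le a a') *)
Record Poset := {
  pcar :> Type;
  ple : pcar -> pcar -> Prop;
  ple_refl : forall a, ple a a;
  ple_trans : forall a b c, ple a b -> ple b c -> ple a c;
  ple_antisym : forall a b, ple a b -> ple b a -> a = b
}.
Arguments ple {p} _ _.
Arguments ple_trans {p a b c} _ _.

Definition pcomp {P : Poset} {a b c : P} (g : ple b c) (f : ple a b) : ple a c :=
  ple_trans f g.

Definition monotone {P Q : Poset} (G : P -> Q) : Prop :=
  forall a b : P, ple a b -> ple (G a) (G b).

(** * Initial sources and topological functors, for a functor between posets.
    A functor is a monotone map [G] together with its action on arrows [Gm]. *)
Section Topological.
Variables (P Q : Poset) (G : P -> Q) (Gm : monotone G).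

Definition G_initial (I : Type) (Ai : I -> P) (A : P) (f : forall i, ple A (Ai i)) : Prop :=
  forall (C : P) (g : forall i, ple C (Ai i)) (h : ple (G C) (G A)),
    (forall i, Gm (g i) = pcomp (Gm (f i)) h) ->
    exists! hb : ple C A, Gm hb = h /\ (forall i, g i = pcomp (f i) hb).

Definition G_lifts (I : Type) (Ai : I -> P) (X : Q) (x : forall i, ple X (G (Ai i)))
  (A : P) (f : forall i, ple A (Ai i)) : Prop :=
  exists e : G A = X,
    forall i, eq_rect (G A) (fun Y => ple Y (G (Ai i))) (Gm (f i)) X e = x i.

Definition topological : Prop :=
  forall (I : Type) (Ai : I -> P) (X : Q) (x : forall i, ple X (G (Ai i))),
    exists (A : P) (f : forall i, ple A (Ai i)),
      G_lifts x f /\ G_initial f /\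
      forall (A' : P) (f' : forall i, ple A' (Ai i)),
        G_lifts x f' -> G_initial f' ->
        existT (fun A0 => forall i, ple A0 (Ai i)) A' f'
        = existT (fun A0 => forall i, ple A0 (Ai i)) A f.
End Topological.
Arguments G_initial {P Q G} Gm {I Ai A} f.
Arguments G_lifts {P Q G} Gm {I Ai X} x {A} f.
Arguments topological {P Q G} Gm.

Record Pomonoid := {
  pm_pos :> Poset;
  pm_mul : pm_pos -> pm_pos -> pm_pos;
  pm_one : pm_pos;
  pm_assoc : forall a b c, pm_mul a (pm_mul b c) = pm_mul (pm_mul a b) c;
  pm_one_l : forall a, pm_mul pm_one a = a;
  pm_one_r : forall a, pm_mul a pm_one = a;
  pm_mul_mono : forall a a' b b', ple a a' -> ple b b' -> ple (pm_mul a b) (pm_mul a' b')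
}.

Record SPoset (S : Pomonoid) := {
  sp_pos :> Poset;
  sp_act : sp_pos -> S -> sp_pos;
  sp_act_one : forall x, sp_act x (pm_one S) = x;
  sp_act_mul : forall x s t, sp_act (sp_act x s) t = sp_act x (pm_mul s t);
  sp_act_mono : forall x x' (s s' : S), ple x x' -> ple s s' ->
                ple (sp_act x s) (sp_act x' s')
}.
Arguments sp_pos {S}.
Arguments sp_act {S s0} _ _.

Record SHom (S : Pomonoid) (A C : SPoset S) := {
  sh_fun :> A -> C;
  sh_mono : monotone sh_fun;
  sh_equiv : forall a s, sh_fun (sp_act a s) = sp_act (sh_fun a) s
}.
Arguments sh_fun {S A C}.
Arguments sh_mono {S A C}.

Record SliceObj (S : Pomonoid) (B : SPoset S) := {
  so_dom : SPoset S;
  so_map : SHom so_dom B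
}.
Arguments so_dom {S B}.
Arguments so_map {S B}.

Record SliceHom (S : Pomonoid) (B : SPoset S) (A C : SliceObj B) := {
  slh_map :> SHom (so_dom A) (so_dom C);
  slh_comm : forall a, so_map C (slh_map a) = so_map A a
}.
Arguments slh_map {S B A C}.

(** order-embeddings (the regular monomorphisms) *)
Definition order_embedding (P Q : Poset) (h : P -> Q) : Prop :=
  forall a a', ple (h a) (h a') <-> ple a a'.

Definition regular_injective (S : Pomonoid) (B : SPoset S) (X : SliceObj B) : Prop :=
  forall (A C : SliceObj B) (m : SliceHom A C),
    order_embedding (sh_fun (slh_map m)) ->
    forall g : SliceHom A X,
      exists h : SliceHom C X,
        forall a, sh_fun (slh_map h) (sh_fun (slh_map m) a) = sh_fun (slh_map g) a.

(* A source (x_i : b <= f a_i) has a G-initial lift exactly when the set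
   L = {c | c <= a_i for all i, f c <= b} has a greatest element m with f m = b;
   since arrows are proofs, the rest of the data is forced by proof irrelevance.
   To find m, embed X into the S-poset Down(X) x B of pairs (down-set, point of
   B) over B by x |-> (down-set of x, f x).  Regular injectivity gives a
   retraction r over B, and m := r (L, b) works: the image of any c in L lies
   below (L, b), which lies below the image of every a_i, and r maps (L, b)
   over b. *)

From Stdlib Require Import ProofIrrelevance FunctionalExtensionality PropExtensionality.

Section GreatestLifts.
Variables (P Q : Poset) (G : P -> Q) (Gm : monotone G).

Definition greatest_lift {I : Type} (a : I -> P) (q : Q) (m : P) : Prop :=
  G m = q /\ (forall i, ple m (a i)) /\
  forall c, (forall i, ple c (a i)) -> ple (G c) q -> ple c m.

Lemma G_lifts_iff {I : Type} (a : I -> P) (q : Q) (x : forall i, ple q (G (a i)))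
    (m : P) (f : forall i, ple m (a i)) :
  G_lifts Gm x f <-> G m = q.
Proof.
  split.
  - intros [e _]; exact e.
  - intro e; exists e; intro i; apply proof_irrelevance.
Qed.

Lemma G_initial_iff {I : Type} {a : I -> P} {m : P} (f : forall i, ple m (a i)) :
  G_initial Gm f <-> forall c, (forall i, ple c (a i)) -> ple (G c) (G m) -> ple c m.
Proof.
  split.
  - intros Hinit c g h.
    destruct (Hinit c g h) as [hb _]; [intro; apply proof_irrelevance | exact hb].
  - intros Hmax C g h _.
    exists (Hmax C g h); split.
    + split; [apply proof_irrelevance | intro; apply proof_irrelevance].
    + intros; apply proof_irrelevance.
Qed.

Lemma topological_of_greatest_lifts :
  (forall (I : Type) (a : I -> P) (q : Q), (forall i, ple q (G (a i))) ->
     exists m, greatest_lift a q m) ->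
  topological Gm.
Proof.
  intros Hex I a q x.
  destruct (Hex I a q x) as [m [Gmq [ma mmax]]].
  exists m, ma; split; [|split].
  - apply G_lifts_iff; exact Gmq.
  - apply G_initial_iff; rewrite Gmq; exact mmax.
  - intros m' f' Hlift Hinit.
    apply G_lifts_iff in Hlift; rewrite G_initial_iff in Hinit.
    assert (m'm : ple m' m) by (apply mmax; [exact f' | rewrite Hlift; apply ple_refl]).
    assert (mm' : ple m m') by (apply Hinit; [exact ma | rewrite Gmq, Hlift; apply ple_refl]).
    destruct (ple_antisym m'm mm').
    f_equal; apply functional_extensionality_dep; intro; apply proof_irrelevance.
Qed.

End GreatestLifts.

Section ProductSPoset.
Variables (S : Pomonoid) (A C : SPoset S).

Definition prod_poset : Poset.
Proof.
  refine (@Build_Poset (A * C) (fun u v => ple (fst u) (fst v) /\ ple (snd u) (snd v)) _ _ _).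
  - intro u; split; apply ple_refl.
  - intros u v w [H1 H2] [H3 H4]; split; eapply ple_trans; eauto.
  - intros [a c] [a' c'] [H1 H2] [H3 H4]; simpl in *.
    f_equal; apply ple_antisym; assumption.
Defined.

Definition prod_sposet : SPoset S.
Proof.
  refine (@Build_SPoset S prod_poset (fun u s => (sp_act (fst u) s, sp_act (snd u) s)) _ _ _).
  - intros [a c]; simpl; rewrite !sp_act_one; reflexivity.
  - intros [a c] s t; simpl; rewrite !sp_act_mul; reflexivity.
  - intros u v s s' [H1 H2] Hs; split; apply sp_act_mono; assumption.
Defined.

Definition snd_shom : SHom prod_sposet C.
Proof.
  refine (@Build_SHom S prod_sposet C (@snd A C) _ _).
  - intros u v [_ H]; exact H.
  - reflexivity.
Defined.

End ProductSPoset.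

Arguments snd_shom {S} A C.

Section DownSets.
Variables (S : Pomonoid) (A : SPoset S).

Definition down_closed (D : A -> Prop) : Prop := forall x y, ple x y -> D y -> D x.

Definition downset : Type := {D : A -> Prop | down_closed D}.

Lemma downset_ext (D E : downset) :
  (forall x, proj1_sig D x <-> proj1_sig E x) -> D = E.
Proof.
  destruct D as [D HD], E as [E HE]; simpl; intro HDE.
  assert (D = E) as <-.
  { apply functional_extensionality; intro x; apply propositional_extensionality, HDE. }
  f_equal; apply proof_irrelevance.
Qed.

Definition downset_poset : Poset.
Proof.
  refine (@Build_Poset downset
            (fun D E => forall x, proj1_sig D x -> proj1_sig E x) _ _ _).
  - auto.
  - auto.
  - intros D E H1 H2; apply downset_ext; split; auto.
Defined.

Definition downset_act (D : downset) (s : S) : downset.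
Proof.
  refine (exist _ (fun x => exists y, proj1_sig D y /\ ple x (sp_act y s)) _).
  intros x x' Hx [y [Hy Hx']]; exists y; split; [exact Hy | exact (ple_trans Hx Hx')].
Defined.

Definition downset_sposet : SPoset S.
Proof.
  refine (@Build_SPoset S downset_poset downset_act _ _ _).
  - intro D; apply downset_ext; simpl; intro x; split.
    + intros [y [Hy Hx]]; rewrite sp_act_one in Hx; exact (proj2_sig D x y Hx Hy).
    + intro Hx; exists x; rewrite sp_act_one; split; [exact Hx | apply ple_refl].
  - intros D s t; apply downset_ext; simpl; intro x; split.
    + intros [w [[y [Hy Hw]] Hx]]; exists y; split; [exact Hy|].
      rewrite <- sp_act_mul; eapply ple_trans; [exact Hx|].
      apply sp_act_mono; [exact Hw | apply ple_refl].
    + intros [y [Hy Hx]]; exists (sp_act y s); split.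
      * exists y; split; [exact Hy | apply ple_refl].
      * rewrite sp_act_mul; exact Hx.
  - intros D E s s' HDE Hs x [y [Hy Hx]]; simpl in *.
    exists y; split; [apply HDE, Hy|].
    eapply ple_trans; [exact Hx|]; apply sp_act_mono; [apply ple_refl | exact Hs].
Defined.

Definition principal_downset (a : A) : downset.
Proof.
  refine (exist _ (fun x => ple x a) _).
  intros x y Hxy Hy; exact (ple_trans Hxy Hy).
Defined.

Lemma principal_downset_act (a : A) (s : S) :
  downset_act (principal_downset a) s = principal_downset (sp_act a s).
Proof.
  apply downset_ext; simpl; intro x; split.
  - intros [y [Hy Hx]]; eapply ple_trans; [exact Hx|].
    apply sp_act_mono; [exact Hy | apply ple_refl].
  - intro Hx; exists a; split; [apply ple_refl | exact Hx].
Qed.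

End DownSets.

Arguments downset {S} A.
Arguments downset_sposet {S} A.
Arguments principal_downset {S A} a.

Section DownsetCover.
Variables (S : Pomonoid) (B : SPoset S) (X : SliceObj B).

Definition downset_cover : SliceObj B :=
  Build_SliceObj (snd_shom (downset_sposet (so_dom X)) B).

Definition downset_unit_shom : SHom (so_dom X) (so_dom downset_cover).
Proof.
  refine (@Build_SHom S (so_dom X) (so_dom downset_cover)
            (fun x => (principal_downset x, so_map X x)) _ _).
  - intros x y Hxy; split; simpl.
    + intros z Hz; exact (ple_trans Hz Hxy).
    + apply sh_mono, Hxy.
  - intros x s; simpl; rewrite principal_downset_act, sh_equiv; reflexivity.
Defined.

Definition downset_unit : SliceHom X downset_cover :=
  @Build_SliceHom S B X downset_cover downset_unit_shom (fun x => eq_refl).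

Lemma downset_unit_order_embedding : order_embedding (sh_fun (slh_map downset_unit)).
Proof.
  intros x y; split.
  - intros [H _]; apply H, ple_refl.
  - apply (sh_mono downset_unit_shom).
Qed.

End DownsetCover.

Arguments downset_cover {S B} X.
Arguments downset_unit_order_embedding {S B} X.

Definition slice_id {S : Pomonoid} {B : SPoset S} (X : SliceObj B) : SliceHom X X :=
  @Build_SliceHom S B X X
    (@Build_SHom S (so_dom X) (so_dom X) (fun x => x) (fun x y H => H) (fun x s => eq_refl))
    (fun x => eq_refl).

Lemma regular_injective_retraction {S : Pomonoid} {B : SPoset S} {X C : SliceObj B}
    {m : SliceHom X C} :
  regular_injective X -> order_embedding (sh_fun (slh_map m)) ->
  exists r : SliceHom C X, forall x, r (m x) = x.
Proof.
  intros Hinj Hm; exact (Hinj X C m Hm (slice_id X)).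
Qed.

Definition lifting_bounds {S : Pomonoid} {B : SPoset S} (X : SliceObj B)
    {I : Type} (a : I -> so_dom X) (b : B) : downset (so_dom X).
Proof.
  refine (exist _ (fun c => (forall i, ple c (a i)) /\ ple (so_map X c) b) _).
  intros x y Hxy [Hya Hyb]; split.
  - intro i; exact (ple_trans Hxy (Hya i)).
  - exact (ple_trans (sh_mono (so_map X) x y Hxy) Hyb).
Defined.

Theorem mainTheorem7 (S : Pomonoid) (B : SPoset S) (X : SliceObj B) :
  regular_injective X ->
  topological (sh_mono (so_map X)).
Proof.
  intro Hinj; apply topological_of_greatest_lifts; intros I a b Hb.
  destruct (regular_injective_retraction
              Hinj (downset_unit_order_embedding X)) as [r Hr].
  set (g := (lifting_bounds X a b, b) : so_dom (downset_cover X)).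
  exists (r g); split; [|split].
  - exact (slh_comm r g).
  - intro i; rewrite <- (Hr (a i)); apply sh_mono.
    split; simpl; [intros c [Hc _]; apply Hc | apply Hb].
  - intros c Hca Hcb; rewrite <- (Hr c); apply sh_mono.
    split; simpl; [|exact Hcb].
    intros y Hyc; apply (proj2_sig (lifting_bounds X a b) y c Hyc); split; assumption.
Qed.
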